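(* Let $\Gamma$ be a finite triangle-free simplicial graph and let $\Lambda\subseteq\Gamma$ be a $K_{3,3}$ subdivision having the minimum number of edges among all $K_{3,3}$ subdivisions $\Lambda''\subseteq\Gamma$ with $B(\Lambda'')\le B(\Lambda)$. Suppose there is a bad edge of $\Lambda$ connecting $\Lambda$-non-essential vertices on two disjoint branches $\alpha$ and $\beta$ of $\Lambda$. Then the unique branch of $\Lambda$ disjoint from both $\alpha$ and $\beta$ is a single edge.
   Context: A subdivision of a graph $H$ is obtained from $H$ by repeatedly inserting valence-two vertices into edges. For a $K_{3,3}$ subdivision $\Lambda\subseteq\Gamma$, the $\Lambda$-essential vertices are those of valence $3$ in $\Lambda$; other vertices of $\Lambda$ are $\Lambda$-non-essential. A branch of $\Lambda$ is a path in $\Lambda$ between two $\Lambda$-essential vertices with no other $\Lambda$-essential vertex on it; two branches are adjacent if they share an endpoint and disjoint otherwise. A bad edge of $\Lambda$ is an edge of $\Gamma$ not in $\Lambda$ whose endpoints are both vertices of $\Lambda$; $B(\Lambda)$ is the number of bad edges. *)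

From mathcomp Require Import all_boot.
Set Implicit Arguments. Unset Strict Implicit. Unset Printing Implicit Defensive.

(* A finite simplicial graph: vertex type T : finType, adjacency e : rel T
   (assumed symmetric and irreflexive in the theorem). *)

Definition triangle_free (T : finType) (e : rel T) : Prop :=
  forall x y z, e x y -> e y z -> ~~ e x z.

Definition fullpath (T : Type) (a : T) (q : seq T) (b : T) : seq T :=
  a :: rcons q b.

Definition consec (T : eqType) (s : seq T) (x y : T) : bool :=
  ((x, y) \in zip s (behead s)) || ((y, x) \in zip s (behead s)).

Definition interior_ok (T : finType) (a b : 'I_3 -> T) (q : 'I_3 -> 'I_3 -> seq T)
    (i j : 'I_3) (x : T) : Prop :=
  (forall k, x != a k) /\ (forall k, x != b k) /\
  (forall i' j', (i', j') != (i, j) -> x \notin fullpath (a i') (q i' j') (b j')).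

(* A subgraph Lambda = (VL, EL) of Gamma = (T, e) is a K_{3,3} subdivision:
   there are six distinct vertices a_0,a_1,a_2,b_0,b_1,b_2 and nine paths
   P_ij (in Gamma) from a_i to b_j with interiors q i j, whose interiors are
   pairwise disjoint and avoid the a's, b's and all other paths, and Lambda is
   exactly the union of these paths (vertices and edges). *)
Definition isK33sub (T : finType) (e : rel T) (VL : {set T}) (EL : rel T) : Prop :=
  exists (a b : 'I_3 -> T) (q : 'I_3 -> 'I_3 -> seq T),
    [/\ [/\ injective a, injective b & (forall i j, a i != b j)],
        (forall i j, path e (a i) (rcons (q i j) (b j)) /\
                     uniq (fullpath (a i) (q i j) (b j))),
        (forall i j x, x \in q i j -> interior_ok a b q i j x),
        VL = [set x | [exists i, exists j, x \in fullpath (a i) (q i j) (b j)]] &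
        (forall x y, EL x y = [exists i, exists j, consec (fullpath (a i) (q i j) (b j)) x y])].

Definition nedges (T : finType) (EL : rel T) : nat :=
  #|[set s : {set T} | [exists x, exists y, EL x y && (s == [set x; y])]]|.

Definition bad_edge (T : finType) (e : rel T) (VL : {set T}) (EL : rel T) (x y : T) : bool :=
  [&& e x y, x \in VL, y \in VL & ~~ EL x y].

Definition nbad (T : finType) (e : rel T) (VL : {set T}) (EL : rel T) : nat :=
  #|[set s : {set T} | [exists x, exists y, bad_edge e VL EL x y && (s == [set x; y])]]|.

Definition valence (T : finType) (EL : rel T) (x : T) : nat := #|[set y | EL x y]|.

Definition essential (T : finType) (VL : {set T}) (EL : rel T) (x : T) : bool :=
  (x \in VL) && (valence EL x == 3).

Definition is_branch (T : finType) (VL : {set T}) (EL : rel T) (x : T) (q : seq T) (y : T) : bool :=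
  [&& path EL x (rcons q y), uniq (fullpath x q y), essential VL EL x,
      essential VL EL y & all (fun z => ~~ essential VL EL z) q].

Definition branches_disjoint (T : finType) (x1 y1 x2 y2 : T) : bool :=
  [&& x1 != x2, x1 != y2, y1 != x2 & y1 != y2].

(* Write Lambda with corners a_0,a_1,a_2 / b_0,b_1,b_2 and paths P_ij from
   a_i to b_j.  Every branch of Lambda is some P_ij (possibly reversed), and
   pairwise disjoint branches form a perfect matching, so after relabelling
   alpha = P_00, beta = P_11, gamma = P_22 with u inside P_00, v inside P_11.
   If P_22 had an interior vertex, the "rerouted" subdivision with corners
   u,a_1,b_1 / v,a_0,b_0 (uv itself being one of its nine paths) would drop
   P_22 and its >= 2 edges, gain only the edge uv, and create no new bad edge:
   this contradicts the minimality of Lambda. *)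

From mathcomp Require Import all_boot zify.
Set Implicit Arguments. Unset Strict Implicit. Unset Printing Implicit Defensive.

Arguments consec : simpl never.
Arguments fullpath : simpl never.

Section Consecutive.
Variable T : eqType.
Implicit Types (s l r : seq T) (x y z w a b : T).

Lemma zip_splitP s x y :
  (x, y) \in zip s (behead s) <-> exists l r, s = l ++ x :: y :: r.
Proof.
case: s => [|c s] /=; first by split => // -[[|? ?] [? ?]].
elim: s c => [|d s IH] c /=; first by split => // -[[|? [|? ?]] [? ?]].
rewrite in_cons; split.
  case/orP => [/eqP [-> ->]|/IH [l [r ->]]]; first by exists [::], s.
  by exists (c :: l), r.
case=> [[|c' l]] [r] /=; first by case=> -> -> _; rewrite eqxx.
by case=> -> E; apply/orP; right; apply/IH; exists l, r.
Qed.

Lemma consecP s x y :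
  consec s x y <-> exists l r, s = l ++ x :: y :: r \/ s = l ++ y :: x :: r.
Proof.
rewrite /consec; split.
  by case/orP => /zip_splitP [l [r E]]; exists l, r; [left|right].
by case=> l [r [E|E]]; apply/orP; [left|right]; apply/zip_splitP; exists l, r.
Qed.

Lemma consec_sym s x y : consec s x y = consec s y x.
Proof. by rewrite /consec orbC. Qed.

Lemma consec_rev s x y : consec (rev s) x y = consec s x y.
Proof.
suff H t : consec t x y -> consec (rev t) x y.
  by apply/idP/idP => [/H|/H //]; rewrite revK.
move=> /consecP [l [r [->|->]]]; apply/consecP; exists (rev r), (rev l);
  rewrite rev_cat !rev_cons -!cats1 -!catA /=; by [right|left].
Qed.

Lemma consec_mem s x y : consec s x y -> (x \in s) && (y \in s).
Proof. by case/consecP => l [r [->|->]]; rewrite !mem_cat !in_cons !eqxx !orbT. Qed.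

Lemma consec_neq s x y : uniq s -> consec s x y -> x != y.
Proof.
move=> U /consecP [l [r [E|E]]]; move: U; rewrite E cat_uniq /= => /and3P [_ _ /andP [H _]];
  by apply: contraNneq H => ->; rewrite mem_head.
Qed.

Lemma uniq_split l1 r1 l2 r2 x :
  uniq (l1 ++ x :: r1) -> l1 ++ x :: r1 = l2 ++ x :: r2 -> l1 = l2 /\ r1 = r2.
Proof.
move=> U E; have U2 : uniq (l2 ++ x :: r2) by rewrite -E.
have n1 : x \notin l1 by move: U; rewrite cat_uniq /= => /and3P [_ /norP []].
have n2 : x \notin l2 by move: U2; rewrite cat_uniq /= => /and3P [_ /norP []].
have S : size l1 = size l2.
  have := congr1 (index x) E; rewrite !index_cat (negbTE n1) (negbTE n2) /= eqxx.
  by rewrite !addn0.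
by move/eqP: E; rewrite eqseq_cat // => /andP [/eqP -> /eqP [->]].
Qed.

Lemma consec_mid l x r y :
  uniq (l ++ x :: r) -> consec (l ++ x :: r) x y -> y = last x l \/ y = head x r.
Proof.
move=> U /consecP [l' [r' [E|E]]]; first by have [_ ->] := uniq_split U E; right.
have E' : l ++ x :: r = rcons l' y ++ x :: r' by rewrite cat_rcons.
by have [-> _] := uniq_split U E'; left; rewrite last_rcons.
Qed.

Lemma consec_cat l w r x y :
  consec (l ++ w :: r) x y = consec (rcons l w) x y || consec (w :: r) x y.
Proof.
apply/idP/idP; last first.
  case/orP => /consecP [l' [r' [E|E]]]; apply/consecP.
  - by exists l', (r' ++ r); left; rewrite -cat_rcons E -!catA.
  - by exists l', (r' ++ r); right; rewrite -cat_rcons E -!catA.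
  - by exists (l ++ l'), r'; left; rewrite -catA -E.
  - by exists (l ++ l'), r'; right; rewrite -catA -E.
suff key x' y' l' r' : l ++ w :: r = l' ++ x' :: y' :: r' ->
    consec (rcons l w) x' y' || consec (w :: r) x' y'.
  case/consecP => [l' [r' [/key //|/key]]].
  by rewrite consec_sym (consec_sym (w :: r)).
elim: l l' => [|c l IH] [|c' l'].
- by case=> -> ->; apply/orP; right; apply/consecP; exists [::], r'; left.
- by case=> -> ->; apply/orP; right; apply/consecP; exists (c' :: l'), r'; left.
- case: l IH => [|d l] IH /=.
    by case=> -> -> ->; apply/orP; left; apply/consecP; exists [::], [::]; left.
  by case=> -> -> E; apply/orP; left; apply/consecP; exists [::], (rcons l w); left.
- case=> -> /IH /orP [] H; apply/orP; [left|right] => //.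
  by move/consecP: H => [l1 [r1 [E|E]]]; apply/consecP; exists (c' :: l1), r1;
    rewrite /= E; [left|right].
Qed.

Lemma mem_fp a q b x : x \in fullpath a q b = [|| x == a, x \in q | x == b].
Proof. by rewrite /fullpath in_cons mem_rcons in_cons (orbC (x == b)). Qed.

Lemma consec_fp_cat a l w r b x y :
  consec (fullpath a (l ++ w :: r) b) x y =
  consec (fullpath a l w) x y || consec (fullpath w r b) x y.
Proof. by rewrite /fullpath rcons_cat /= -cat_cons consec_cat. Qed.

Lemma fullpath_rev a q b : rev (fullpath a q b) = fullpath b (rev q) a.
Proof. by rewrite /fullpath rev_cons rev_rcons. Qed.

Lemma consec_fp_rev a q b x y :
  consec (fullpath b (rev q) a) x y = consec (fullpath a q b) x y.
Proof. by rewrite -fullpath_rev consec_rev. Qed.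

Lemma consec_interior a q b x y :
  q != [::] -> consec (fullpath a q b) x y -> (x \in q) || (y \in q).
Proof.
rewrite /consec /fullpath /=.
suff H q' a' x' y' : q' != [::] -> (x', y') \in zip (a' :: rcons q' b) (rcons q' b) ->
   (x' \in q') || (y' \in q').
  by move=> nq /orP [/H -> //|/(H _ _ _ _ nq)]; rewrite orbC.
elim: q' a' => [//|c q' IH] a' _.
have -> : zip (a' :: rcons (c :: q') b) (rcons (c :: q') b) =
   (a', c) :: zip (c :: rcons q' b) (rcons q' b) by [].
rewrite in_cons => /orP [/eqP [_ ->]|]; first by rewrite mem_head orbT.
case: q' IH => [|d q'] IH.
  have -> : zip (c :: rcons [::] b) (rcons [::] b) = [:: (c, b)] by [].
  by rewrite in_cons orbF => /eqP [-> _]; rewrite eqxx.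
by move/IH => /(_ isT) /orP [] H; rewrite !inE in H *; rewrite H !orbT.
Qed.

Lemma interior_split a q b l z r :
  fullpath a q b = l ++ z :: r -> l != [::] -> r != [::] -> z \in q.
Proof.
rewrite /fullpath; case: l => [//|c l] /=; case/lastP: r => [//|r w] [_ E] _ _.
move/eqP: E; rewrite -rcons_cons -rcons_cat eqseq_rcons => /andP [/eqP -> _].
by rewrite mem_cat mem_head orbT.
Qed.

Lemma fullpath_last a q b l d : fullpath a q b = rcons l d -> d = b.
Proof. by rewrite /fullpath -rcons_cons => /eqP; rewrite eqseq_rcons => /andP [_ /eqP]. Qed.

End Consecutive.

Section FlattenUniq.
Variables (T I : eqType) (F : I -> seq T).

Lemma flatten_uniq_intro s :
  uniq s -> (forall i, i \in s -> uniq (F i)) ->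
  (forall i j x, i \in s -> j \in s -> i != j -> x \in F i -> x \notin F j) ->
  uniq (flatten (map F s)).
Proof.
elim: s => [//|k s IH] /= /andP [ks us] HU HD.
rewrite cat_uniq; apply/and3P; split; first by apply: HU; exact: mem_head.
- apply/hasPn => x /flatten_mapP [j js xj]; apply/negP => xk.
  have kj : k != j by apply: contraNneq ks => ->.
  have js' : j \in k :: s by rewrite in_cons js orbT.
  by move: (HD k j x (mem_head _ _) js' kj xk); rewrite xj.
- apply: IH => // [i Hi|i j x Hi Hj]; [apply: HU|apply: HD];
    by rewrite in_cons ?Hi ?Hj orbT.
Qed.

Lemma flatten_uniq_elim s :
  uniq (flatten (map F s)) ->
  (forall i, i \in s -> uniq (F i)) /\
  (forall i j x, i \in s -> j \in s -> i != j -> x \in F i -> x \notin F j).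
Proof.
elim: s => [//|k s IH] /=; rewrite cat_uniq => /and3P [uk hk /IH [IH1 IH2]].
split; first by move=> i; rewrite in_cons => /orP [/eqP ->|/IH1].
have H1 j x : j \in s -> x \in F k -> x \notin F j.
  move=> js xk; apply/negP => xj; move/hasPn: hk => /(_ x) H.
  have : x \in flatten [seq F i | i <- s] by apply/flatten_mapP; exists j.
  by move/H; rewrite xk.
move=> i j x; rewrite !in_cons => /orP [/eqP ->|Hi] /orP [/eqP ->|js].
- by rewrite eqxx.
- by move=> _; apply: H1.
- by move=> _ xi; apply/negP => xk; move: (H1 i x Hi xk); rewrite xi.
- exact: IH2.
Qed.

End FlattenUniq.

Notation o0 := (@Ordinal 3 0 isT).
Notation o1 := (@Ordinal 3 1 isT).
Notation o2 := (@Ordinal 3 2 isT).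

Lemma ord3P (i : 'I_3) : [\/ i = o0, i = o1 | i = o2].
Proof.
case: i => [[|[|[|n]]] Hn] //.
- by constructor 1; apply: val_inj.
- by constructor 2; apply: val_inj.
- by constructor 3; apply: val_inj.
Qed.

Lemma perm3 (i0 i1 i2 : 'I_3) : i0 != i1 -> i0 != i2 -> i1 != i2 ->
  exists s : 'I_3 -> 'I_3, [/\ injective s, s o0 = i0, s o1 = i1 & s o2 = i2].
Proof.
move=> h01 h02 h12; exists (fun k : 'I_3 => nth i0 [:: i0; i1; i2] k); split => //.
move=> k k'; case: (ord3P k) => ->; case: (ord3P k') => -> //= E;
  by move: h01 h02 h12; rewrite E eqxx ?andbF.
Qed.

Section Representation.
Variables (T : finType) (e : rel T).
Implicit Types (a b : 'I_3 -> T) (q : 'I_3 -> 'I_3 -> seq T) (VL : {set T}) (EL : rel T).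

Definition K33rep a b q VL EL : Prop :=
  [/\ [/\ injective a, injective b & (forall i j, a i != b j)],
      (forall i j, path e (a i) (rcons (q i j) (b j)) /\
                   uniq (fullpath (a i) (q i j) (b j))),
      (forall i j x, x \in q i j -> interior_ok a b q i j x),
      VL = [set x | [exists i, exists j, x \in fullpath (a i) (q i j) (b j)]] &
      (forall x y, EL x y = [exists i, exists j, consec (fullpath (a i) (q i j) (b j)) x y])].

Lemma K33rep_isK33sub a b q VL EL : K33rep a b q VL EL -> isK33sub e VL EL.
Proof. by move=> H; exists a, b, q. Qed.

Definition union_vertices a b q : {set T} :=
  [set x | [exists i, exists j, x \in fullpath (a i) (q i j) (b j)]].
Definition union_edges a b q : rel T :=
  fun x y => [exists i, exists j, consec (fullpath (a i) (q i j) (b j)) x y].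

(* The fifteen pieces of a subdivision: six corners and nine path interiors.
   The disjointness conditions of [K33rep] say exactly that listing all
   pieces gives a duplicate-free sequence. *)
Definition role := (('I_3 + 'I_3) + ('I_3 * 'I_3))%type.

Definition roles : seq role :=
  [:: inl (inl o0); inl (inl o1); inl (inl o2);
      inl (inr o0); inl (inr o1); inl (inr o2);
      inr (o0, o0); inr (o0, o1); inr (o0, o2);
      inr (o1, o0); inr (o1, o1); inr (o1, o2);
      inr (o2, o0); inr (o2, o1); inr (o2, o2)].

Lemma roles_all r : r \in roles.
Proof.
by case: r => [[i|i]|[i j]]; case: (ord3P i) => ->; try (case: (ord3P j) => ->).
Qed.

Definition role_vertices a b q (r : role) : seq T :=
  match r with
  | inl (inl i) => [:: a i]
  | inl (inr j) => [:: b j]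
  | inr p => q p.1 p.2
  end.

Definition vertex_list a b q := flatten (map (role_vertices a b q) roles).

Lemma vertex_list_fp a b q i j x :
  x \in fullpath (a i) (q i j) (b j) -> x \in vertex_list a b q.
Proof.
rewrite mem_fp => /or3P [/eqP ->|xq|/eqP ->]; apply/flatten_mapP.
- by exists (inl (inl i)); rewrite ?roles_all //= mem_head.
- by exists (inr (i, j)); rewrite ?roles_all.
- by exists (inl (inr j)); rewrite ?roles_all //= mem_head.
Qed.

Lemma K33rep_vertex_list_mem a b q VL EL x :
  K33rep a b q VL EL -> x \in vertex_list a b q -> x \in VL.
Proof.
case=> _ _ _ -> _ /flatten_mapP [[[i|j]|[i j]] _ /=]; rewrite inE.
- by rewrite inE => /eqP ->; apply/existsP; exists i; apply/existsP; exists i;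
    rewrite mem_fp eqxx.
- by rewrite inE => /eqP ->; apply/existsP; exists j; apply/existsP; exists j;
    rewrite mem_fp eqxx !orbT.
- by move=> xq; apply/existsP; exists i; apply/existsP; exists j; rewrite mem_fp xq orbT.
Qed.

Lemma K33rep_vertex_list_uniq a b q VL EL :
  K33rep a b q VL EL -> uniq (vertex_list a b q).
Proof.
case=> [[ia ib ab] HP HI _ _].
apply: flatten_uniq_intro => //.
  move=> [[i|j]|[i j]] _ //=.
  by have [_] := HP i j; rewrite /fullpath /= rcons_uniq => /andP [_ /andP []].
have aq i i' j' : a i \notin q i' j' by apply/negP => /HI [/(_ i) /eqP].
have bq j i' j' : b j \notin q i' j' by apply/negP => /HI [_ [/(_ j) /eqP]].
move=> [[i|j]|[i j]] [[i'|j']|[i' j']] x _ _ /= ne; rewrite ?inE.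
- by move=> /eqP ->; apply: contra ne => /eqP /ia ->.
- by move=> /eqP ->; apply/negP => /eqP E; move: (ab i j'); rewrite E eqxx.
- by move=> /eqP ->.
- by move=> /eqP ->; apply/negP => /eqP E; move: (ab i' j); rewrite E eqxx.
- by move=> /eqP ->; apply: contra ne => /eqP /ib ->.
- by move=> /eqP ->.
- by move=> xq; apply/negP => /eqP E; move: (aq i' i j); rewrite -E xq.
- by move=> xq; apply/negP => /eqP E; move: (bq j' i j); rewrite -E xq.
- move=> xq; apply/negP => xq'; have [_ [_ H]] := HI _ _ _ xq.
  have ne' : (i', j') != (i, j) by apply: contra ne => /eqP [-> ->].
  by move: (H _ _ ne'); rewrite mem_fp xq' orbT.
Qed.

Lemma K33rep_of_vertex_list a b q :
  uniq (vertex_list a b q) -> (forall i j, path e (a i) (rcons (q i j) (b j))) ->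
  K33rep a b q (union_vertices a b q) (union_edges a b q).
Proof.
move=> /flatten_uniq_elim [HU HD] HP.
have D r r' x : r != r' -> x \in role_vertices a b q r -> x \notin role_vertices a b q r'.
  by apply: HD; apply: roles_all.
have ia : injective a.
  move=> i i' E; apply/eqP; apply/negPn/negP => ne.
  have : inl (inl i) != inl (inl i') :> role by apply: contra ne => /eqP [->].
  by move/D => /(_ (a i)) /=; rewrite !inE E eqxx => /(_ isT).
have ib : injective b.
  move=> i i' E; apply/eqP; apply/negPn/negP => ne.
  have : inl (inr i) != inl (inr i') :> role by apply: contra ne => /eqP [->].
  by move/D => /(_ (b i)) /=; rewrite !inE E eqxx => /(_ isT).
have ab i j : a i != b j.
  apply/negP => /eqP E; have : inl (inl i) != inl (inr j) :> role by [].
  by move/D => /(_ (a i)) /=; rewrite !inE E eqxx => /(_ isT).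
have aq i i' j' : a i \notin q i' j'.
  have : inl (inl i) != inr (i', j') :> role by [].
  by move/D => /(_ (a i)) /=; rewrite !inE eqxx => /(_ isT).
have bq j i' j' : b j \notin q i' j'.
  have : inl (inr j) != inr (i', j') :> role by [].
  by move/D => /(_ (b j)) /=; rewrite !inE eqxx => /(_ isT).
split => //.
- move=> i j; split => //; rewrite /fullpath /= rcons_uniq mem_rcons in_cons.
  rewrite (negbTE (ab i j)) (negbTE (aq _ _ _)) (bq _ _ _).
  exact: (HU (inr (i, j)) (roles_all _)).
- move=> i j x xq; split; [|split].
  + by move=> k; apply: contraTneq xq => ->.
  + by move=> k; apply: contraTneq xq => ->.
  + move=> i' j' ne; rewrite mem_fp; apply/negP => /or3P [/eqP E|xq'|/eqP E].
    * by move: (aq i' i j); rewrite -E xq.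
    * have : inr (i, j) != inr (i', j') :> role by apply: contra ne => /eqP [-> ->].
      by move/D => /(_ x xq) /=; rewrite xq'.
    * by move: (bq j' i j); rewrite -E xq.
Qed.

End Representation.

Section Symmetries.
Variables (T : finType) (e : rel T).
Hypothesis e_sym : symmetric e.

Lemma path_rev_sym x p y : path e x (rcons p y) -> path e y (rcons (rev p) x).
Proof.
move=> H; have -> : rcons (rev p) x = rev (belast x (rcons p y)).
  by rewrite belast_rcons rev_cons.
rewrite -{1}(last_rcons x p y) rev_path.
by rewrite (eq_path (e' := e)) // => u v; rewrite e_sym.
Qed.

Lemma K33rep_transpose a b q VL EL :
  K33rep e a b q VL EL -> K33rep e b a (fun j i => rev (q i j)) VL EL.
Proof.
case=> [[ia ib ab] HP HI HV HE]; split.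
- by split => // j i; rewrite eq_sym.
- move=> j i; have [p u] := HP i j; split; first exact: path_rev_sym.
  by rewrite -fullpath_rev rev_uniq.
- move=> j i x; rewrite mem_rev => /HI [h1 [h2 h3]]; split => //; split => //.
  move=> j' i' ne; rewrite -fullpath_rev mem_rev; apply: h3.
  by apply: contra ne => /eqP [-> ->].
- rewrite HV; apply/setP => x; rewrite !inE; apply/existsP/existsP.
    move=> [i /existsP [j H]]; exists j; apply/existsP; exists i.
    by rewrite -fullpath_rev mem_rev.
  move=> [j /existsP [i H]]; exists i; apply/existsP; exists j.
  by rewrite -fullpath_rev mem_rev in H.
- move=> x y; rewrite HE; apply/existsP/existsP.
    move=> [i /existsP [j H]]; exists j; apply/existsP; exists i.
    by rewrite consec_fp_rev.
  move=> [j /existsP [i H]]; exists i; apply/existsP; exists j.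
  by rewrite consec_fp_rev in H.
Qed.

Lemma K33rep_relabel a b q VL EL (s t : 'I_3 -> 'I_3) :
  K33rep e a b q VL EL -> injective s -> injective t ->
  K33rep e (a \o s) (b \o t) (fun i j => q (s i) (t j)) VL EL.
Proof.
case=> [[ia ib ab] HP HI HV HE] Is It.
have [s' _ s's] := injF_bij Is.
have [t' _ t't] := injF_bij It.
split.
- by split => //=; apply: inj_comp.
- by move=> i j; apply: HP.
- move=> i j x /HI [h1 [h2 h3]]; split; first by move=> k; apply: h1.
  split; first by move=> k; apply: h2.
  by move=> i' j' ne; apply: h3; apply: contra ne => /eqP [/Is -> /It ->].
- rewrite HV; apply/setP => x; rewrite !inE; apply/existsP/existsP.
    move=> [i /existsP [j H]]; exists (s' i); apply/existsP; exists (t' j).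
    by rewrite /= s's t't.
  by move=> [i /existsP [j H]]; exists (s i); apply/existsP; exists (t j).
- move=> x y; rewrite HE; apply/existsP/existsP.
    move=> [i /existsP [j H]]; exists (s' i); apply/existsP; exists (t' j).
    by rewrite /= s's t't.
  by move=> [i /existsP [j H]]; exists (s i); apply/existsP; exists (t j).
Qed.

End Symmetries.

Section LocalStructure.
Variables (T : finType) (e : rel T).
Variables (a b : 'I_3 -> T) (q : 'I_3 -> 'I_3 -> seq T) (VL : {set T}) (EL : rel T).
Hypothesis HR : K33rep e a b q VL EL.

Lemma EL_consec i j x y : consec (fullpath (a i) (q i j) (b j)) x y -> EL x y.
Proof. by case: HR => _ _ _ _ -> H; apply/existsP; exists i; apply/existsP; exists j. Qed.

Lemma EL_interior i j x y :
  x \in q i j -> EL x y -> consec (fullpath (a i) (q i j) (b j)) x y.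
Proof.
case: HR => _ _ HI _ HE xq; rewrite HE => /existsP [i' /existsP [j' H]].
case: (eqVneq (i', j') (i, j)) => [[<- <-] //|ne].
have [_ [_ /(_ i' j' ne)]] := HI _ _ _ xq.
by have /andP [-> _] := consec_mem H.
Qed.

(* Interior vertices have valence at most 2. *)
Lemma interior_not_essential i j x : x \in q i j -> ~~ essential VL EL x.
Proof.
move=> xq; rewrite /essential /valence negb_and; apply/orP; right.
have HU : uniq (fullpath (a i) (q i j) (b j)) by case: HR => _ /(_ i j) [].
have [l [r Eq]] : exists l r, q i j = l ++ x :: r.
  by case/splitPr: xq => l r; exists l, r.
have Ef : fullpath (a i) (q i j) (b j) = (a i :: l) ++ x :: rcons r (b j).
  by rewrite Eq /fullpath rcons_cat.
rewrite Ef in HU.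
have sub : [set y | EL x y] \subset [set last x (a i :: l); head x (rcons r (b j))].
  apply/subsetP => y; rewrite !inE => /(EL_interior xq); rewrite Ef.
  by move=> /(consec_mid HU) [->|->]; rewrite eqxx ?orbT.
have := subset_leq_card sub; rewrite cards2.
by apply: contraTneq => ->; case: (_ != _).
Qed.

Definition corner_next i j := head (b j) (q i j).

Lemma corner_next_edge i j : EL (a i) (corner_next i j).
Proof.
apply: (@EL_consec i j); apply/consecP.
exists [::], (behead (rcons (q i j) (b j))); left.
by rewrite /corner_next /fullpath; case: (q i j).
Qed.

Lemma corner_neighbour i y : EL (a i) y -> exists j, y = corner_next i j.
Proof.
case: HR => [[ia ib ab] HP HI HV HE]; rewrite HE => /existsP [i' /existsP [j H]].
have /andP [m _] := consec_mem H.
have ii : i' = i.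
  move: m; rewrite mem_fp => /or3P [/eqP /ia -> //|/HI [/(_ i) /eqP //]|].
  by move/eqP => E; move: (ab i j); rewrite E eqxx.
subst i'; exists j; have [_ U] := HP i j.
have [E|E] := consec_mid (l := [::]) U H.
  by move: (consec_neq U H); rewrite E /= eqxx.
by rewrite E /corner_next; case: (q i j).
Qed.

Lemma corner_next_inj i : injective (corner_next i).
Proof.
case: HR => [[ia ib ab] HP HI _ _].
have hcase j : corner_next i j = b j \/ corner_next i j \in q i j.
  by rewrite /corner_next; case: (q i j) => [|c p] /=; [left|right; rewrite mem_head].
have hP j : corner_next i j \in fullpath (a i) (q i j) (b j).
  by rewrite mem_fp; case: (hcase j) => ->; rewrite ?eqxx ?orbT.
have inner j j' : corner_next i j \in q i j -> corner_next i j = corner_next i j' -> j = j'.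
  move=> hq E; apply/eqP; apply/negPn/negP => ne.
  have ne2 : (i, j') != (i, j) by apply: contra ne => /eqP [->].
  have [_ [_ /(_ _ _ ne2)]] := HI _ _ _ hq.
  by rewrite E hP.
move=> j j' E; case: (hcase j) => Hj; last exact: inner.
case: (hcase j') => Hj'; last by rewrite (inner j' j Hj' (esym E)).
by apply: ib; rewrite -Hj -Hj' E.
Qed.

(* Corners have valence 3: their neighbours are the three [corner_next i j]. *)
Lemma corner_essential i : essential VL EL (a i).
Proof.
apply/andP; split.
  by case: HR => _ _ _ -> _; rewrite inE; apply/existsP; exists i; apply/existsP;
    exists i; rewrite mem_fp eqxx.
rewrite /valence; have -> : [set y | EL (a i) y] = corner_next i @: [set: 'I_3].
  apply/setP => y; rewrite inE; apply/idP/imsetP.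
    by case/corner_neighbour => j ->; exists j.
  by case=> j _ ->; apply: corner_next_edge.
by rewrite card_imset ?cardsT ?card_ord //; apply: corner_next_inj.
Qed.

End LocalStructure.

Lemma corner_b_essential (T : finType) (e : rel T) (e_sym : symmetric e) a b q VL EL j :
  K33rep e a b q VL EL -> essential VL EL (b j).
Proof. by move=> HR; exact: (corner_essential (K33rep_transpose e_sym HR)). Qed.

Section Branches.
Variables (T : finType) (e : rel T).
Hypothesis e_sym : symmetric e.
Variables (a b : 'I_3 -> T) (q : 'I_3 -> 'I_3 -> seq T) (VL : {set T}) (EL : rel T).
Hypothesis HR : K33rep e a b q VL EL.

Lemma essential_corner x :
  essential VL EL x -> (exists i, x = a i) \/ (exists j, x = b j).
Proof.
move=> Hx; have := Hx; case/andP; case: HR => _ _ _ -> _.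
rewrite inE => /existsP [i /existsP [j]]; rewrite mem_fp => /or3P [/eqP ->|xq|/eqP ->] _.
- by left; exists i.
- by move: (interior_not_essential HR xq); rewrite Hx.
- by right; exists j.
Qed.

Lemma interior_successor i j s1 w1 z d s2 c :
  fullpath (a i) (q i j) (b j) = rcons s1 w1 ++ z :: d :: s2 ->
  EL z c -> c != w1 -> c = d.
Proof.
move=> EP; have HU : uniq (fullpath (a i) (q i j) (b j)) by case: HR => _ /(_ i j) [].
have zq : z \in q i j by apply: (interior_split EP); rewrite -?size_eq0 ?size_rcons.
move=> /(EL_interior HR zq); rewrite EP => /(consec_mid (l := rcons s1 w1)).
by rewrite last_rcons -EP => /(_ HU) [->|->] //; rewrite eqxx.
Qed.

(* A walk in Lambda leaving an interior vertex z of P_ij away from its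
   predecessor w1, never revisiting a vertex and passing only through
   non-essential vertices until it stops at an essential one, follows P_ij
   to its end. *)
Lemma walk_follows_path i j r : forall z s1 w1 s2 y,
  fullpath (a i) (q i j) (b j) = rcons s1 w1 ++ z :: s2 -> s2 != [::] ->
  uniq (w1 :: z :: rcons r y) -> path EL z (rcons r y) ->
  all (fun x => ~~ essential VL EL x) r -> essential VL EL y -> rcons r y = s2.
Proof.
elim: r => [|c r IH] z s1 w1 s2 y EP ns2 U Hp Hr Hy;
  case: s2 ns2 EP => [//|d s2] _ EP.
all: have EP' : fullpath (a i) (q i j) (b j) = rcons (rcons s1 w1) z ++ d :: s2
  by rewrite EP [in RHS]cat_rcons.
- move: Hp => /= /andP [Hzy _].
  have yw1 : y != w1 by apply: contraTneq U => ->; rewrite /= !inE eqxx orbT.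
  have Ey := interior_successor EP Hzy yw1; subst d; congr (_ :: _).
  case: s2 EP EP' => [//|d' s2] EP EP'.
  have yq : y \in q i j by apply: (interior_split EP'); rewrite -?size_eq0 ?size_rcons.
  by move: (interior_not_essential HR yq); rewrite Hy.
- move: Hp U Hr => /= /andP [Hzc Hp] /andP [U1 U2] /andP [Hc Hr].
  have cw1 : c != w1 by apply: contraNneq U1 => ->; rewrite !inE eqxx orbT.
  have Ec := interior_successor EP Hzc cw1; subst d; congr (_ :: _).
  case: s2 EP EP' => [|d' s2] EP EP'.
    have Ec : c = b j by apply: (fullpath_last (a := a i) (q := q i j)); rewrite EP' cats1.
    by move: (corner_b_essential e_sym j HR); rewrite -Ec (negbTE Hc).
  exact: (IH c (rcons s1 w1) z).
Qed.

Lemma branch_from_corner i p y :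
  is_branch VL EL (a i) p y -> exists j, p = q i j /\ y = b j.
Proof.
case/and5P => Hp U _ Hy Hn.
case: p Hp U Hn => [|c p] /=.
  move=> /andP [/(corner_neighbour HR) [j Ej] _] _ _; exists j.
  rewrite /corner_next in Ej; case E: (q i j) Ej => [|c' q'] /= Ey; first by rewrite Ey.
  have : c' \in q i j by rewrite E mem_head.
  by move/(interior_not_essential HR); rewrite -Ey Hy.
move=> /andP [/(corner_neighbour HR) [j Ej] Hp] U /andP [Hc Hn].
rewrite /corner_next in Ej; case E: (q i j) Ej => [|c' q'] /= Ec.
  by move: (corner_b_essential e_sym j HR); rewrite -Ec (negbTE Hc).
subst c.
have EP : fullpath (a i) (q i j) (b j) = rcons [::] (a i) ++ c' :: rcons q' (b j).
  by rewrite E.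
have ns : rcons q' (b j) != [::] by rewrite -size_eq0 size_rcons.
rewrite /fullpath /= in U.
have /eqP := walk_follows_path EP ns U Hp Hn Hy.
by rewrite eqseq_rcons => /andP [/eqP -> /eqP ->]; exists j; rewrite E.
Qed.

End Branches.

Lemma branch_is_path (T : finType) (e : rel T) (e_sym : symmetric e) a b q VL EL
  (HR : K33rep e a b q VL EL) x p y : is_branch VL EL x p y ->
  exists i j, (x = a i /\ p = q i j /\ y = b j) \/ (x = b j /\ p = rev (q i j) /\ y = a i).
Proof.
move=> H; have := H; case/and5P => _ _ Hx _ _.
case: (essential_corner HR Hx) => [[i Ei]|[j Ej]]; subst x.
  by have [j [-> ->]] := branch_from_corner e_sym HR H; exists i, j; left.
have [i [-> ->]] := branch_from_corner e_sym (K33rep_transpose e_sym HR) H.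
by exists i, j; right.
Qed.

Lemma branch_indices (T : finType) (e : rel T) (e_sym : symmetric e) a b q VL EL
  (HR : K33rep e a b q VL EL) x p y :
  is_branch VL EL x p y -> exists i j,
    [/\ (forall z, z \in fullpath x p y -> ~~ essential VL EL z -> z \in q i j),
        (p == [::]) = (q i j == [::]),
        a i \in [:: x; y] & b j \in [:: x; y]].
Proof.
move=> H; have := H; case/and5P => _ _ Hx Hy _.
have [i [j [[Ex [Ep Ey]]|[Ex [Ep Ey]]]]] := branch_is_path e_sym HR H; exists i, j;
  subst x p y; split; rewrite ?inE ?eqxx ?orbT //.
- by move=> z; rewrite mem_fp => /or3P [/eqP ->|//|/eqP ->]; rewrite ?Hx ?Hy.
- by move=> z; rewrite mem_fp mem_rev => /or3P [/eqP ->|//|/eqP ->]; rewrite ?Hx ?Hy.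
- by rewrite -!size_eq0 size_rev.
Qed.

Section Counting.
Variable T : finType.

Definition edge_set (R : rel T) : {set {set T}} :=
  [set s : {set T} | [exists x, exists y, R x y && (s == [set x; y])]].

Lemma edge_setP (R : rel T) x y : R x y -> [set x; y] \in edge_set R.
Proof. by move=> H; rewrite inE; apply/existsP; exists x; apply/existsP; exists y; rewrite H eqxx. Qed.

Lemma nedges_lt (R R' : rel T) s1 s2 s :
  s1 \in edge_set R -> s2 \in edge_set R -> s1 != s2 ->
  edge_set R' \subset (edge_set R :\: [set s1; s2]) :|: [set s] ->
  nedges R' < nedges R.
Proof.
move=> h1 h2 h12 sub; rewrite /nedges -/(edge_set R) -/(edge_set R').
have two : [set s1; s2] \subset edge_set R by rewrite subUset !sub1set h1 h2.
have c1 := subset_leq_card sub.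
rewrite cardsU cardsD (setIidPr two) cards2 h12 cards1 in c1.
have := subset_leq_card two; rewrite cards2 h12; move: c1.
move: #|edge_set R| #|edge_set R'| #|_ :&: [set s]|; lia.
Qed.

Lemma nbad_mono (e : rel T) (VL VL' : {set T}) (EL EL' : rel T) :
  {subset VL' <= VL} -> (forall x y, EL x y -> x \in VL' -> y \in VL' -> EL' x y) ->
  nbad e VL' EL' <= nbad e VL EL.
Proof.
move=> sV sE; apply: subset_leq_card; apply/subsetP => s; rewrite !inE.
move=> /existsP [x /existsP [y /andP [/and4P [exy hx hy nEL] /eqP ->]]].
apply/existsP; exists x; apply/existsP; exists y; rewrite /bad_edge exy !sV //= eqxx andbT.
by apply: contra nEL => H; apply: sE.
Qed.

End Counting.

Section PathSurgery.
Variables (T : Type) (e : rel T).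

Lemma path_join x p y r z : path e x (rcons p y) -> path e y (rcons r z) ->
  path e x (rcons (p ++ y :: r) z).
Proof.
move=> H1 H2; rewrite rcons_cat cat_path /=; move: H1; rewrite rcons_path.
by move=> /andP [-> ->].
Qed.

Lemma path_split x l w r y : path e x (rcons (l ++ w :: r) y) ->
  path e x (rcons l w) /\ path e w (rcons r y).
Proof.
rewrite rcons_cat cat_path /= => /and3P [H1 H2 H3]; split => //.
by rewrite rcons_path H1 H2.
Qed.

End PathSurgery.

Section Reroute.
Variables (T : finType) (e : rel T).
Hypothesis e_sym : symmetric e.
Variables (a b : 'I_3 -> T) (q : 'I_3 -> 'I_3 -> seq T) (VL : {set T}) (EL : rel T).
Hypothesis HR : K33rep e a b q VL EL.
Variables (u v : T) (qa qb qc qd : seq T).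
Hypotheses (E00 : q o0 o0 = qa ++ u :: qb) (E11 : q o1 o1 = qc ++ v :: qd).

(* The rerouted subdivision, with corners u, a_1, b_1 and v, a_0, b_0.  Its
   nine paths are the edge uv, the four halves of P_00 and P_11, the paths
   P_10, P_01, and the concatenations P_12 + P_02^-1 and P_21^-1 + P_20; the
   path P_22 is dropped. *)
Definition ra (k : 'I_3) : T := nth u [:: u; a o1; b o1] k.
Definition rb (k : 'I_3) : T := nth v [:: v; a o0; b o0] k.
Definition rq (i j : 'I_3) : seq T := nth [::] (nth [::]
   [:: [:: [::]; rev qa; qb];
       [:: qc; q o1 o2 ++ b o2 :: rev (q o0 o2); q o1 o0];
       [:: rev qd; rev (q o0 o1); rev (q o2 o1) ++ a o2 :: q o2 o0]] i) j.

Local Notation VL' := (union_vertices ra rb rq).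
Local Notation EL' := (union_edges ra rb rq).

Lemma rerouted_vertex_perm : perm_eq (vertex_list ra rb rq ++ q o2 o2) (vertex_list a b q).
Proof.
apply/permP => p; rewrite /vertex_list /ra /rb /rq /= E00 E11 !count_cat /=.
rewrite ?count_cat ?count_rev /= ?count_cat.
move: (nat_of_bool (p u)) (nat_of_bool (p v)) (nat_of_bool (p (a o0)))
  (nat_of_bool (p (a o1))) (nat_of_bool (p (a o2))) (nat_of_bool (p (b o0)))
  (nat_of_bool (p (b o1))) (nat_of_bool (p (b o2))) => *.
lia.
Qed.

Lemma rerouted_uniq : uniq (vertex_list ra rb rq ++ q o2 o2).
Proof. by rewrite (perm_uniq rerouted_vertex_perm); exact: K33rep_vertex_list_uniq HR. Qed.

Hypothesis Huv : e u v.

Lemma rerouted_paths i j : path e (ra i) (rcons (rq i j) (rb j)).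
Proof.
have HP i' j' : path e (a i') (rcons (q i' j') (b j')) by case: HR => _ /(_ i' j') [].
have [P0a P0b] : path e (a o0) (rcons qa u) /\ path e u (rcons qb (b o0)).
  by apply: path_split; rewrite -E00.
have [P1a P1b] : path e (a o1) (rcons qc v) /\ path e v (rcons qd (b o1)).
  by apply: path_split; rewrite -E11.
case: (ord3P i) => ->; case: (ord3P j) => ->; rewrite /ra /rb /rq /=.
- by rewrite Huv.
- exact: path_rev_sym.
- exact: P0b.
- exact: P1a.
- exact: (path_join (HP o1 o2) (path_rev_sym e_sym (HP o0 o2))).
- exact: (HP o1 o0).
- exact: path_rev_sym.
- exact: (path_rev_sym e_sym (HP o0 o1)).
- exact: (path_join (path_rev_sym e_sym (HP o2 o1)) (HP o2 o0)).
Qed.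

Lemma rerouted_K33 : K33rep e ra rb rq VL' EL'.
Proof.
apply: K33rep_of_vertex_list; last exact: rerouted_paths.
by move: rerouted_uniq; rewrite cat_uniq => /andP [].
Qed.

Lemma rerouted_sub_vertices : {subset VL' <= VL}.
Proof.
move=> x; rewrite inE => /existsP [i /existsP [j H]].
apply: (K33rep_vertex_list_mem HR); rewrite -(perm_mem rerouted_vertex_perm) mem_cat.
by rewrite (vertex_list_fp H).
Qed.

Lemma rerouted_avoids x : x \in q o2 o2 -> x \notin VL'.
Proof.
move=> xq; apply/negP; rewrite inE => /existsP [i /existsP [j /vertex_list_fp H]].
by move: rerouted_uniq; rewrite cat_uniq => /and3P [_ /hasPn /(_ x xq)]; rewrite H.
Qed.

Lemma rerouted_new_edge x y : EL' x y -> EL x y \/ [set x; y] = [set u; v].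
Proof.
have ELc := EL_consec HR.
move=> /existsP [i /existsP [j]].
case: (ord3P i) => ->; case: (ord3P j) => ->; rewrite /ra /rb /rq /= => H.
- right; move: H; rewrite /consec /fullpath /= !inE.
  by case/orP => /eqP [-> ->] //; rewrite setUC.
- by rewrite consec_fp_rev in H; left; apply: (ELc o0 o0); rewrite E00 consec_fp_cat H.
- by left; apply: (ELc o0 o0); rewrite E00 consec_fp_cat H orbT.
- by left; apply: (ELc o1 o1); rewrite E11 consec_fp_cat H.
- rewrite consec_fp_cat in H; case/orP: H => H; left; first exact: (ELc o1 o2).
  by apply: (ELc o0 o2); rewrite -consec_fp_rev.
- by left; exact: (ELc o1 o0).
- by rewrite consec_fp_rev in H; left; apply: (ELc o1 o1); rewrite E11 consec_fp_cat H orbT.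
- by rewrite consec_fp_rev in H; left; exact: (ELc o0 o1).
- rewrite consec_fp_cat in H; case/orP: H => H; left; last exact: (ELc o2 o0).
  by apply: (ELc o2 o1); rewrite -consec_fp_rev.
Qed.

Hypothesis nq22 : q o2 o2 != [::].

Lemma rerouted_old_edge x y : EL x y -> x \in VL' -> y \in VL' -> EL' x y.
Proof.
have EL'c i j x' y' : consec (fullpath (ra i) (rq i j) (rb j)) x' y' -> EL' x' y'.
  by move=> H; apply/existsP; exists i; apply/existsP; exists j.
case: HR => _ _ _ _ -> /existsP [i /existsP [j]].
case: (ord3P i) => ->; case: (ord3P j) => -> H hx hy.
- rewrite E00 consec_fp_cat in H; case/orP: H => H.
    by apply: (EL'c o0 o1); rewrite /ra /rb /rq /= consec_fp_rev.
  by apply: (EL'c o0 o2); rewrite /ra /rb /rq /=.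
- by apply: (EL'c o2 o1); rewrite /ra /rb /rq /= consec_fp_rev.
- by apply: (EL'c o1 o1); rewrite /ra /rb /rq /= consec_fp_cat consec_fp_rev H orbT.
- by apply: (EL'c o1 o2); rewrite /ra /rb /rq /=.
- rewrite E11 consec_fp_cat in H; case/orP: H => H.
    by apply: (EL'c o1 o0); rewrite /ra /rb /rq /=.
  by apply: (EL'c o2 o0); rewrite /ra /rb /rq /= consec_fp_rev.
- by apply: (EL'c o1 o1); rewrite /ra /rb /rq /= consec_fp_cat H.
- by apply: (EL'c o2 o2); rewrite /ra /rb /rq /= consec_fp_cat H orbT.
- by apply: (EL'c o2 o2); rewrite /ra /rb /rq /= consec_fp_cat consec_fp_rev H.
- by case/orP: (consec_interior nq22 H) => /rerouted_avoids; rewrite ?hx ?hy.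
Qed.

Lemma rerouted_nbad : nbad e VL' EL' <= nbad e VL EL.
Proof. exact: nbad_mono rerouted_sub_vertices rerouted_old_edge. Qed.

(* The two edges of P_22 at a_2 disappear and only uv is added. *)
Lemma rerouted_fewer_edges : nedges EL' < nedges EL.
Proof.
case E22: (q o2 o2) nq22 => [//|c q''] _.
have Hc : c \notin VL' by apply: rerouted_avoids; rewrite E22 mem_head.
pose d := head (b o2) q''.
have U22 : uniq (fullpath (a o2) (q o2 o2) (b o2)) by case: HR => _ /(_ o2 o2) [].
rewrite E22 /fullpath /= in U22.
have [a2c a2d] : a o2 != c /\ a o2 != d.
  move: U22 => /andP [H _]; rewrite in_cons negb_or in H; case/andP: H => H1 H2.
  split => //; apply: contraNneq H2 => ->.
  by rewrite /d; case: (q'') => [|z w] /=; rewrite ?mem_rcons mem_head.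
have EL1 : EL (a o2) c.
  apply: (EL_consec HR (i := o2) (j := o2)); apply/consecP.
  by exists [::], (rcons q'' (b o2)); left; rewrite E22.
have EL2 : EL c d.
  apply: (EL_consec HR (i := o2) (j := o2)); apply/consecP.
  exists [:: a o2], (behead (rcons q'' (b o2))); left.
  by rewrite E22 /fullpath /d /=; case: (q'').
apply: (nedges_lt (s := [set u; v]) (edge_setP EL1) (edge_setP EL2)).
  apply/negP => /eqP H; have : a o2 \in [set c; d] by rewrite -H !inE eqxx.
  by rewrite !inE (negbTE a2c) (negbTE a2d).
apply/subsetP => s; rewrite inE => /existsP [x /existsP [y /andP [H /eqP ->]]].
have [hx hy] : x \in VL' /\ y \in VL'.
  by case/existsP: H => i /existsP [j /consec_mem /andP [hx hy]]; rewrite !inE;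
    split; apply/existsP; exists i; apply/existsP; exists j.
case: (rerouted_new_edge H) => [Hxy|->]; last by rewrite in_setU set11 orbT.
rewrite in_setU in_setD (edge_setP Hxy) andbT; apply/orP; left.
have cs : c \notin [set x; y].
  by rewrite !inE; apply/norP; split; apply: contraNneq Hc => ->.
by rewrite !inE; apply/norP; split; apply: contraNneq cs => ->; rewrite !inE eqxx ?orbT.
Qed.

End Reroute.

Lemma minimal_opposite_path_empty (T : finType) (e : rel T) (e_sym : symmetric e)
  a b q (VL : {set T}) (EL : rel T) (HR : K33rep e a b q VL EL)
  (hmin : forall (VL' : {set T}) (EL' : rel T), isK33sub e VL' EL' ->
            nbad e VL' EL' <= nbad e VL EL -> nedges EL <= nedges EL')
  (u v : T) : u \in q o0 o0 -> v \in q o1 o1 -> e u v -> q o2 o2 = [::].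
Proof.
move=> Hu Hv Huv; apply/eqP; apply: contraT => nq22.
have [qa [qb E00]] : exists qa qb, q o0 o0 = qa ++ u :: qb.
  by case/splitPr: Hu => l r; exists l, r.
have [qc [qd E11]] : exists qc qd, q o1 o1 = qc ++ v :: qd.
  by case/splitPr: Hv => l r; exists l, r.
have K := rerouted_K33 e_sym HR E00 E11 Huv.
have := hmin _ _ (K33rep_isK33sub K) (rerouted_nbad HR E00 E11 nq22).
by rewrite leqNgt (rerouted_fewer_edges HR E00 E11 nq22).
Qed.

Lemma disjoint_corner_index (T : finType) (f : 'I_3 -> T) i j (x1 y1 x2 y2 : T) :
  branches_disjoint x1 y1 x2 y2 -> f i \in [:: x1; y1] -> f j \in [:: x2; y2] -> i != j.
Proof.
case/and4P => h1 h2 h3 h4 Hi Hj; apply: contraTneq Hj => <-.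
by move: Hi; rewrite !inE => /orP [] /eqP ->; rewrite negb_or ?h1 ?h2 ?h3 ?h4.
Qed.

Theorem mainTheorem8 (T : finType) (e : rel T)
  (e_sym : symmetric e) (e_irr : irreflexive e) (e_tf : triangle_free e)
  (VL : {set T}) (EL : rel T)
  (hK : isK33sub e VL EL)
  (hmin : forall (VL' : {set T}) (EL' : rel T), isK33sub e VL' EL' ->
            nbad e VL' EL' <= nbad e VL EL -> nedges EL <= nedges EL')
  (x1 y1 x2 y2 : T) (q1 q2 : seq T)
  (halpha : is_branch VL EL x1 q1 y1) (hbeta : is_branch VL EL x2 q2 y2)
  (hdisj : branches_disjoint x1 y1 x2 y2)
  (u v : T)
  (hu : u \in fullpath x1 q1 y1) (hu_ne : ~~ essential VL EL u)
  (hv : v \in fullpath x2 q2 y2) (hv_ne : ~~ essential VL EL v)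
  (huv : bad_edge e VL EL u v) :
  forall (x3 y3 : T) (q3 : seq T),
    is_branch VL EL x3 q3 y3 ->
    branches_disjoint x3 y3 x1 y1 -> branches_disjoint x3 y3 x2 y2 ->
    q3 = [::].
Proof.
move=> x3 y3 q3 hgamma hd31 hd32; case: hK => a [b [q HR]].
have [i0 [j0 [in_alpha _ A1 B1]]] := branch_indices e_sym HR halpha.
have [i1 [j1 [in_beta _ A2 B2]]] := branch_indices e_sym HR hbeta.
have [i2 [j2 [_ empty_gamma A3 B3]]] := branch_indices e_sym HR hgamma.
(* Relabel the corners so that alpha, beta, gamma become P_00, P_11, P_22. *)
have [s [Is s0 s1 s2]] : exists s : 'I_3 -> 'I_3,
    [/\ injective s, s o0 = i0, s o1 = i1 & s o2 = i2].
  apply: perm3; first exact: disjoint_corner_index hdisj A1 A2.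
    by rewrite eq_sym (disjoint_corner_index hd31 A3 A1).
  by rewrite eq_sym (disjoint_corner_index hd32 A3 A2).
have [t [It t0 t1 t2]] : exists t : 'I_3 -> 'I_3,
    [/\ injective t, t o0 = j0, t o1 = j1 & t o2 = j2].
  apply: perm3; first exact: disjoint_corner_index hdisj B1 B2.
    by rewrite eq_sym (disjoint_corner_index hd31 B3 B1).
  by rewrite eq_sym (disjoint_corner_index hd32 B3 B2).
have HR' := K33rep_relabel HR Is It.
have Hu : u \in q (s o0) (t o0) by rewrite s0 t0; apply: in_alpha.
have Hv : v \in q (s o1) (t o1) by rewrite s1 t1; apply: in_beta.
have Huv : e u v by case/and4P: huv.
have := minimal_opposite_path_empty e_sym HR' hmin Hu Hv Huv.
by rewrite /= s2 t2 => E; apply/eqP; rewrite empty_gamma E.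
Qed.
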